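(* Let $G\le\mathrm{O}(d)$ be finite and $z_1,\ldots,z_n\in\mathbb{R}^d$. Put $$\alpha(\{z_i\}_{i=1}^n,G):=\inf_{x,y\in\mathcal{O}}\ \max_{f\in\mathcal{F}(x,y)}\Big(\sum_{w\in S(x,y)}\lambda_{\min}\Big(\sum_{i\in f^{-1}(w)}v_i(x)v_i(x)^\top\Big)\Big)^{1/2}.$$ Then the max filter bank $\Phi:\mathbb{R}^d/G\to\mathbb{R}^n$, $\Phi([x])=(\langle\!\langle[z_i],[x]\rangle\!\rangle)_{i=1}^n$, satisfies $$\inf_{\substack{[x],[y]\in\mathbb{R}^d/G\\ [x]\ne[y]}}\frac{\|\Phi([x])-\Phi([y])\|}{d([x],[y])}\ge\alpha(\{z_i\}_{i=1}^n,G).$$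
   Context: For $x\in\mathbb{R}^d$, $[x]:=\{gx:g\in G\}$; $d([x],[y]):=\min_{p\in[x],q\in[y]}\|p-q\|$ and $\langle\!\langle[x],[y]\rangle\!\rangle:=\max_{p\in[x],q\in[y]}\langle p,q\rangle$. The open Voronoi cell $V_x$ is the set of $y$ such that $x$ is the unique maximizer of $\langle p,y\rangle$ over $p\in[x]$; $Q_x:=\bigcup_{p\in[x]}V_p$. $P(G):=\{x:\mathrm{stab}_G(x)=\{\mathrm{id}\}\}$, and $\mathcal{O}:=P(G)\cap\bigcap_{i=1}^nQ_{z_i}$. For $x\in\mathcal{O}$, $v_i(x)$ is the unique element of $\arg\max_{p\in[z_i]}\langle p,x\rangle$. $S(x,y):=\{q\in[y]:V_q\cap V_x\ne\varnothing\}$, and $\mathcal{F}(x,y)$ is the (nonempty) set of functions $f:\{1,\ldots,n\}\to[y]$ with $f(i)\in S(x,y)\cap\arg\max_{q\in[y]}\langle q,v_i(x)\rangle$ for all $i$. An empty sum of matrices is the zero matrix; $\lambda_{\min}$ denotes the smallest eigenvalue. *)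

From HB Require Import structures.
From mathcomp Require Import all_boot all_order all_algebra.
From mathcomp Require Import boolp classical_sets functions fsbigop reals.
Set Implicit Arguments. Unset Strict Implicit. Unset Printing Implicit Defensive.
Import Order.TTheory GRing.Theory Num.Theory.
Local Open Scope classical_set_scope.
Local Open Scope ring_scope.

Section MaxFilter.
Variables (R : realType) (d : nat).
Implicit Types (G : seq 'M[R]_d) (x y p q : 'cV[R]_d).

Definition mf_dot (m : nat) (x y : 'cV[R]_m) : R := \sum_(i < m) x i 0 * y i 0.
Definition enorm (m : nat) (x : 'cV[R]_m) : R := Num.sqrt (mf_dot x x).

Definition finite_orth_group G : Prop :=
  [/\ 1%:M \in G,
      (forall g h, g \in G -> h \in G -> g *m h \in G),
      (forall g, g \in G -> g^T \in G) &
      (forall g, g \in G -> g^T *m g = 1%:M)].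

Definition gorbit G x : set 'cV[R]_d := [set p | exists2 g, g \in G & p = g *m x].

Definition odist G x y : R :=
  inf [set r | exists p, exists q, [/\ gorbit G x p, gorbit G y q & r = enorm (p - q)]].

Definition opair G x y : R :=
  sup [set r | exists p, exists q, [/\ gorbit G x p, gorbit G y q & r = mf_dot p q]].

Definition voronoi G x : set 'cV[R]_d :=
  [set y | forall p, gorbit G x p -> p != x -> mf_dot p y < mf_dot x y].

Definition Qcell G x : set 'cV[R]_d :=
  [set y | exists2 p, gorbit G x p & voronoi G p y].

Definition Pfree G : set 'cV[R]_d :=
  [set x | forall g, g \in G -> g *m x = x -> g = 1%:M].

Definition Oset G (n : nat) (z : 'I_n -> 'cV[R]_d) : set 'cV[R]_d :=
  [set x | Pfree G x /\ forall i, Qcell G (z i) x].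

Definition argmax_orbit G z x : set 'cV[R]_d :=
  [set p | gorbit G z p /\ forall q, gorbit G z q -> mf_dot q x <= mf_dot p x].

(* v_i(x): the (for x in O, unique) element of arg max_{p in [z_i]} <p,x> *)
Definition vsel G z x : 'cV[R]_d := xget 0 (argmax_orbit G z x).

Definition Sset G x y : set 'cV[R]_d :=
  [set q | gorbit G y q /\ voronoi G q `&` voronoi G x !=set0].

Definition Fset G (n : nat) (z : 'I_n -> 'cV[R]_d) x y : set ('I_n -> 'cV[R]_d) :=
  [set f | forall i, Sset G x y (f i) /\ argmax_orbit G y (vsel G (z i) x) (f i)].

Definition lambda_min (m : nat) (A : 'M[R]_m) : R := inf [set a | eigenvalue A a].

Definition fvalue G (n : nat) (z : 'I_n -> 'cV[R]_d) x y (f : 'I_n -> 'cV[R]_d) : R :=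
  Num.sqrt (\sum_(w \in Sset G x y)
     lambda_min (\sum_(i < n | f i == w) vsel G (z i) x *m (vsel G (z i) x)^T)).

Definition mf_alpha G (n : nat) (z : 'I_n -> 'cV[R]_d) : R :=
  inf [set r | exists x, exists y, [/\ Oset G z x, Oset G z y &
        r = sup [set s | exists2 f, Fset G z x y f & s = fvalue G z x y f]]].

Definition maxfilter G (n : nat) (z : 'I_n -> 'cV[R]_d) x : 'cV[R]_n :=
  \col_(i < n) opair G (z i) x.

End MaxFilter.

From HB Require Import structures.
From mathcomp Require Import all_boot all_order all_algebra.
From mathcomp Require Import boolp classical_sets functions fsbigop reals.
From mathcomp Require Import finmap cardinality.
From mathcomp Require Import ring lra.
Import Order.TTheory GRing.Theory Num.Theory.
Local Open Scope classical_set_scope.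
Local Open Scope ring_scope.
Set Implicit Arguments. Unset Strict Implicit. Unset Printing Implicit Defensive.

(* Fix f in F(x,y) and write v_i := v_i(x).  Since f(i) maximizes <., v_i> over [y],
   Phi([x])_i - Phi([y])_i = <v_i, x - f(i)>.  Grouping the indices i by the value
   w = f(i), each group contributes at least lambda_min(sum_{f(i) = w} v_i v_i^T) ||x - w||^2
   to ||Phi([x]) - Phi([y])||^2, and ||x - w|| >= d([x],[y]) because w lies in [y].  This
   gives alpha d([x],[y]) <= ||Phi([x]) - Phi([y])|| on O x O.  The set O contains every
   point off finitely many hyperplanes, so it is dense (move x along the moment curve
   t |-> (t, t^2, ..., t^d): each <k, x + (t, ..., t^d)> is a nonzero polynomial in t),
   and both sides are Lipschitz in (x, y), so the inequality holds everywhere.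
   For symmetric positive semidefinite M, lambda_min(M) ||u||^2 <= <u, M u> because the
   infimum c of the Rayleigh quotient is an eigenvalue: M - c is positive semidefinite
   with Rayleigh infimum 0, which an invertible positive semidefinite matrix cannot have. *)

Lemma quadratic_ge0_discr (R : realFieldType) (a b c : R) : 0 <= c ->
  (forall t, 0 <= a + 2 * t * b + t ^+ 2 * c) -> b ^+ 2 <= a * c.
Proof.
move=> c_ge0 q_ge0; have [c0|c_gt0] := eqVneq c 0.
  have [b0|b_neq0] := eqVneq b 0; first by rewrite b0 c0 expr0n mulr0.
  have := q_ge0 (- (a + 1) / (2 * b)).
  have -> : 2 * (- (a + 1) / (2 * b)) * b = - (a + 1) by field.
  by rewrite c0 mulr0 addr0; lra.
have c_pos : 0 < c by rewrite lt_def c_gt0.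
have := q_ge0 (- b / c); rewrite -(pmulr_rge0 _ c_pos).
have -> : c * (a + 2 * (- b / c) * b + (- b / c) ^+ 2 * c) = a * c - b ^+ 2 by field.
by rewrite subr_ge0.
Qed.

Section Dot.
Variables (R : realType) (m : nat).
Implicit Types (x y w u : 'cV[R]_m) (A : 'M[R]_m).

Definition psdmx A := forall u, 0 <= mf_dot u (A *m u).

Lemma dotE x y : mf_dot x y = (x^T *m y) 0 0.
Proof. by rewrite /mf_dot mxE; apply: eq_bigr => i _; rewrite mxE. Qed.

Lemma dotC x y : mf_dot x y = mf_dot y x.
Proof. by rewrite /mf_dot; apply: eq_bigr => i _; rewrite mulrC. Qed.

Lemma dotDl x y w : mf_dot (x + y) w = mf_dot x w + mf_dot y w.
Proof. by rewrite /mf_dot -big_split; apply: eq_bigr => i _; rewrite !mxE mulrDl. Qed.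

Lemma dotZl a x w : mf_dot (a *: x) w = a * mf_dot x w.
Proof. by rewrite /mf_dot mulr_sumr; apply: eq_bigr => i _; rewrite !mxE mulrA. Qed.

Lemma dotNl x w : mf_dot (- x) w = - mf_dot x w.
Proof. by rewrite -scaleN1r dotZl mulN1r. Qed.

Lemma dotBl x y w : mf_dot (x - y) w = mf_dot x w - mf_dot y w.
Proof. by rewrite dotDl dotNl. Qed.

Lemma dotDr x y w : mf_dot w (x + y) = mf_dot w x + mf_dot w y.
Proof. by rewrite dotC dotDl !(dotC w). Qed.

Lemma dotZr a x w : mf_dot w (a *: x) = a * mf_dot w x.
Proof. by rewrite dotC dotZl dotC. Qed.

Lemma dotBr x y w : mf_dot w (x - y) = mf_dot w x - mf_dot w y.
Proof. by rewrite dotC dotBl !(dotC w). Qed.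

Lemma dot0r w : mf_dot w 0 = 0.
Proof. by rewrite -(scale0r 0) dotZr mul0r. Qed.

Lemma dot_sumr w (I : Type) (r : seq I) (P : pred I) (F : I -> 'cV[R]_m) :
  mf_dot w (\sum_(i <- r | P i) F i) = \sum_(i <- r | P i) mf_dot w (F i).
Proof. exact: (big_morph (mf_dot w) (fun x y => dotDr x y w) (dot0r w)). Qed.

Lemma dot_mulmx A x y : mf_dot (A *m x) y = mf_dot x (A^T *m y).
Proof. by rewrite !dotE trmx_mul mulmxA. Qed.

Lemma dotxx_ge0 x : 0 <= mf_dot x x.
Proof. by apply: sumr_ge0 => i _; rewrite -expr2 sqr_ge0. Qed.

Lemma dotxx_eq0 x : (mf_dot x x == 0) = (x == 0).
Proof.
apply/idP/eqP => [|->]; last by rewrite dot0r.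
rewrite psumr_eq0 => [/allP x0|i _]; last by rewrite -expr2 sqr_ge0.
apply/matrixP => i j; rewrite (ord1 j) mxE.
by have /implyP/(_ isT) := x0 i (mem_index_enum i); rewrite mulf_eq0 orbb => /eqP.
Qed.

Lemma enorm_ge0 x : 0 <= enorm x.
Proof. exact: sqrtr_ge0. Qed.

Lemma enorm_sqr x : enorm x ^+ 2 = mf_dot x x.
Proof. by rewrite sqr_sqrtr // dotxx_ge0. Qed.

Lemma enorm_eq0 x : (enorm x == 0) = (x == 0).
Proof. by rewrite -sqrf_eq0 enorm_sqr dotxx_eq0. Qed.

Lemma enormN x : enorm (- x) = enorm x.
Proof. by rewrite /enorm dotNl dotC dotNl opprK. Qed.

Lemma enormB x y : enorm (x - y) = enorm (y - x).
Proof. by rewrite -enormN opprB. Qed.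

Lemma psd_cauchy_schwarz A x y : A^T = A -> psdmx A ->
  mf_dot x (A *m y) ^+ 2 <= mf_dot x (A *m x) * mf_dot y (A *m y).
Proof.
move=> A_sym A_psd; apply: quadratic_ge0_discr => // t.
have := A_psd (x + t *: y).
have xAy : mf_dot y (A *m x) = mf_dot x (A *m y) by rewrite dotC dot_mulmx A_sym.
rewrite mulmxDr -scalemxAr !(dotDl, dotDr, dotZl, dotZr) xAy; lra.
Qed.

Lemma dot_le_enorm x y : mf_dot x y <= enorm x * enorm y.
Proof.
have id_psd : psdmx 1%:M by move=> u; rewrite mul1mx dotxx_ge0.
have := psd_cauchy_schwarz x y (tr_scalar_mx _ 1) id_psd; rewrite !mul1mx => CS.
apply: le_trans (ler_norm _) _.
by rewrite -sqrtr_sqr /enorm -sqrtrM ?dotxx_ge0 // ler_sqrt // mulr_ge0 ?dotxx_ge0.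
Qed.

Lemma enormD x y : enorm (x + y) <= enorm x + enorm y.
Proof.
rewrite -(ler_pXn2r (n := 2)) ?nnegrE ?addr_ge0 ?enorm_ge0 //.
rewrite enorm_sqr !(dotDl, dotDr) (dotC y x) sqrrD -!enorm_sqr.
have := dot_le_enorm x y; lra.
Qed.

Lemma enorm_le_l1 x : enorm x <= \sum_i `|x i 0|.
Proof.
suff [] : mf_dot x x <= (\sum_i `|x i 0|) ^+ 2 /\ 0 <= \sum_i `|x i 0|.
  by move=> le s_ge0; rewrite -(ler_pXn2r (n := 2)) ?nnegrE ?enorm_ge0 // enorm_sqr.
rewrite /mf_dot; elim/big_rec2: _ => [|i s t _ [IH s_ge0]]; first by rewrite expr0n.
rewrite -[x i 0 * x i 0]expr2 -real_normK ?num_real // addr_ge0 //.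
by split => //; have := normr_ge0 (x i 0); nra.
Qed.

End Dot.

Section SupInf.
Variable R : realType.
Implicit Types (S : set R) (r : R).

Lemma sup_eq_max S r : S r -> ubound S r -> sup S = r.
Proof.
move=> Sr r_ub; apply/le_anti/andP; split; first by apply: ge_sup r_ub; exists r.
by apply: ub_le_sup Sr; exists r.
Qed.

Lemma inf_eq_min S r : S r -> lbound S r -> inf S = r.
Proof.
move=> Sr r_lb; apply/le_anti/andP; split; last by apply: lb_le_inf r_lb; exists r.
by apply: ge_inf Sr; exists r.
Qed.

Lemma sup_ge0 S : lbound S 0 -> 0 <= sup S.
Proof.
move=> S_ge0; have [S_sup|/sup_out ->//] := pselect (has_sup S).
have [[s Ss] _] := S_sup; exact: le_trans (S_ge0 _ Ss) (sup_upper_bound S_sup Ss).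
Qed.

Lemma inf_ge0 S : lbound S 0 -> 0 <= inf S.
Proof.
by move=> S_ge0; have [->|/set0P S_neq0] := eqVneq S set0; [rewrite inf0 | exact: lb_le_inf].
Qed.

End SupInf.

Lemma argmax_seq (R : realDomainType) (T : eqType) (s : seq T) (F : T -> R) :
  s != [::] -> exists2 t, t \in s & forall u, u \in s -> F u <= F t.
Proof.
elim: s => [//|a [|b s] IH] _.
  by exists a; rewrite ?mem_head // => u; rewrite inE => /eqP ->.
have [t ts t_max] := IH isT.
have [Fat|Fta] := lerP (F a) (F t).
  by exists t => [|u]; rewrite inE ?ts ?orbT // => /predU1P [->|/t_max].
exists a => [|u]; first exact: mem_head.
by rewrite inE => /predU1P [->//|/t_max/le_trans]; apply; apply: ltW.
Qed.

Lemma sup_mul_le (R : realType) (S : set R) (a b : R) : 0 <= a -> 0 <= b ->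
  (forall s, S s -> s * a <= b) -> sup S * a <= b.
Proof.
move=> a_ge0 b_ge0 S_le; have [->|a_neq0] := eqVneq a 0; first by rewrite mulr0.
have a_gt0 : 0 < a by rewrite lt_def a_neq0.
rewrite -ler_pdivlMr //; have [->|/set0P S_neq0] := eqVneq S set0.
  by rewrite sup0 divr_ge0.
by apply: ge_sup S_neq0 _ => s Ss; rewrite ler_pdivlMr ?S_le.
Qed.

Section Rayleigh.
Variables (R : realType) (d : nat).
Implicit Types (A M N : 'M[R]_d) (u v w : 'cV[R]_d).

Definition abs_summx A : R := \sum_j \sum_k `|A j k|.

Lemma abs_summx_ge0 A : 0 <= abs_summx A.
Proof. by apply: sumr_ge0 => j _; apply: sumr_ge0. Qed.

Lemma dot_mulmx_le A u : mf_dot u (A *m u) <= abs_summx A * mf_dot u u.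
Proof.
rewrite /abs_summx mulr_suml /mf_dot; apply: ler_sum => j _.
rewrite mxE mulr_sumr mulr_suml; apply: ler_sum => k _.
have coord_le i : `|u i 0| ^+ 2 <= \sum_l u l 0 * u l 0.
  rewrite real_normK ?num_real // (bigD1 i) //= expr2 lerDl.
  by apply: sumr_ge0 => l _; rewrite -expr2 sqr_ge0.
apply: le_trans (ler_norm _) _; rewrite mulrCA normrM ler_wpM2l // normrM.
have := coord_le j; have := coord_le k; have := normr_ge0 (u j 0); have := normr_ge0 (u k 0).
nra.
Qed.

Lemma unitmx_dot_ge N : N \in unitmx ->
  exists2 K, 0 <= K & forall w, mf_dot w w <= K * mf_dot (N *m w) (N *m w).
Proof.
move=> N_unit; exists (abs_summx ((invmx N)^T *m invmx N)) => [|w].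
  exact: abs_summx_ge0.
have wE : w = invmx N *m (N *m w) by rewrite mulKmx.
have := dot_mulmx_le ((invmx N)^T *m invmx N) (N *m w).
by rewrite -mulmxA -dot_mulmx -wE.
Qed.

Lemma psd_sq_le N u : N^T = N -> psdmx N ->
  mf_dot (N *m u) (N *m u) <= abs_summx N * mf_dot u (N *m u).
Proof.
move=> N_sym N_psd; have := psd_cauchy_schwarz u (N *m u) N_sym N_psd.
rewrite -{1}[N in N *m (N *m u)]N_sym -dot_mulmx.
have := dot_mulmx_le N (N *m u); have := abs_summx_ge0 N.
have := N_psd u; have := dotxx_ge0 (N *m u).
set s := mf_dot (N *m u) _; set q := mf_dot u _; set p := mf_dot _ (N *m (N *m u)).
move=> s_ge0 q_ge0 K_ge0 p_le CS.
have : s * s <= abs_summx N * q * s.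
  by rewrite -expr2 (le_trans CS) // -mulrA mulrCA ler_wpM2l.
have [->|s_neq0] := eqVneq s 0; first by rewrite mulr_ge0.
by rewrite ler_pM2r // lt_def s_neq0 s_ge0.
Qed.

Lemma psd_unitmx_rayleigh_gt0 N : N^T = N -> psdmx N -> N \in unitmx ->
  exists2 e, 0 < e & forall u, mf_dot u u = 1 -> e <= mf_dot u (N *m u).
Proof.
move=> N_sym N_psd /unitmx_dot_ge [K K_ge0 N_inj].
have L_gt0 : 0 < K * abs_summx N + 1 by rewrite ltr_pwDr ?mulr_ge0 ?abs_summx_ge0.
exists (K * abs_summx N + 1)^-1 => [|u u1]; first by rewrite invr_gt0.
rewrite -(ler_pM2l L_gt0) mulrV ?unitfE ?gt_eqF //.
have := N_inj u; have := psd_sq_le u N_sym N_psd; have := N_psd u; have := abs_summx_ge0 N.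
by rewrite u1; nra.
Qed.

Section RayleighInf.
Variable M : 'M[R]_d.
Hypotheses (M_sym : M^T = M) (M_psd : psdmx M).

Definition rayleigh_inf : R :=
  inf [set mf_dot u (M *m u) | u in [set u | mf_dot u u = 1]].

Lemma rayleigh_inf_ge0 : 0 <= rayleigh_inf.
Proof. by apply: inf_ge0 => _ [u _ <-]. Qed.

Lemma rayleigh_inf_le u : rayleigh_inf * mf_dot u u <= mf_dot u (M *m u).
Proof.
have [->|u_neq0] := eqVneq u 0; first by rewrite dot0r mulr0 mulmx0 dot0r.
have n_gt0 : 0 < enorm u by rewrite lt_def enorm_eq0 u_neq0 enorm_ge0.
rewrite -enorm_sqr -ler_pdivlMr ?exprn_gt0 //.
apply: ge_inf; first by exists 0 => _ [v _ <-].
exists ((enorm u)^-1 *: u); rewrite /= -?scalemxAr !(dotZl, dotZr) -?enorm_sqr.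
  by field; rewrite gt_eqF.
by rewrite mulrA -expr2 exprVn mulrC.
Qed.

Hypothesis d_gt0 : (0 < d)%N.

Lemma det_sub_rayleigh_inf : \det (M - rayleigh_inf%:M) = 0.
Proof.
set c := rayleigh_inf; set N := M - c%:M.
have N_sym : N^T = N by rewrite /N linearB /= M_sym tr_scalar_mx.
have qN u : mf_dot u (N *m u) = mf_dot u (M *m u) - c * mf_dot u u.
  by rewrite /N mulmxBl dotBr mul_scalar_mx dotZr.
have N_psd : psdmx N by move=> u; rewrite qN subr_ge0 rayleigh_inf_le.
apply/eqP; apply: contraT; rewrite -unitfE -unitmxE.
move=> /(psd_unitmx_rayleigh_gt0 N_sym N_psd) [e e_gt0 N_ge].
suff : c + e <= c by rewrite gerDl leNgt e_gt0.
apply: lb_le_inf => [|_ [u /= u1 <-]].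
  pose e1 : 'cV[R]_d := delta_mx (Ordinal d_gt0) 0.
  exists (mf_dot e1 (M *m e1)), e1 => //=.
  by rewrite dotE trmx_delta mul_delta_mx mxE !eqxx.
by have := N_ge u u1; rewrite qN u1 mulr1; lra.
Qed.

Lemma eigenvalue_rayleigh_inf : eigenvalue M rayleigh_inf.
Proof.
have /eqP/det0P [v v_neq0 vN] := det_sub_rayleigh_inf.
apply/eigenvalueP; exists v => //.
by move: vN; rewrite mulmxBr mul_mx_scalar => /eqP; rewrite subr_eq0 => /eqP.
Qed.

Lemma lambda_min_rayleigh_inf : lambda_min M = rayleigh_inf.
Proof.
apply: inf_eq_min => [|a /eigenvalueP [w wM w_neq0]]; first exact: eigenvalue_rayleigh_inf.
have Mu : M *m w^T = a *: w^T by rewrite -[M]M_sym -trmx_mul wM linearZ.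
have := rayleigh_inf_le w^T; rewrite Mu dotZr ler_pM2r // lt_def dotxx_ge0 andbT.
by rewrite dotxx_eq0 -trmx0 (inj_eq trmx_inj).
Qed.

Lemma lambda_min_ge0 : 0 <= lambda_min M.
Proof. by rewrite lambda_min_rayleigh_inf rayleigh_inf_ge0. Qed.

Lemma lambda_min_le u : lambda_min M * mf_dot u u <= mf_dot u (M *m u).
Proof. by rewrite lambda_min_rayleigh_inf rayleigh_inf_le. Qed.

End RayleighInf.
End Rayleigh.

Section FrameOperator.
Variables (R : realType) (d : nat) (I : finType) (P : pred I) (v : I -> 'cV[R]_d).

Definition frame_mx : 'M[R]_d := \sum_(i | P i) v i *m (v i)^T.

Lemma frame_mx_sym : frame_mx^T = frame_mx.
Proof. by rewrite linear_sum; apply: eq_bigr => i _; rewrite /= trmx_mul trmxK. Qed.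

Lemma dot_frame_mx u : mf_dot u (frame_mx *m u) = \sum_(i | P i) mf_dot (v i) u ^+ 2.
Proof.
rewrite mulmx_suml dot_sumr; apply: eq_bigr => i _.
by rewrite -mulmxA [(v i)^T *m u]mx11_scalar mul_mx_scalar dotZr -dotE dotC expr2.
Qed.

Lemma frame_mx_psd : psdmx frame_mx.
Proof. by move=> u; rewrite dot_frame_mx; apply: sumr_ge0 => i _; apply: sqr_ge0. Qed.

Hypothesis d_gt0 : (0 < d)%N.

Lemma lambda_min_frame_mx_ge0 : 0 <= lambda_min frame_mx.
Proof. exact: lambda_min_ge0 frame_mx_sym frame_mx_psd d_gt0. Qed.

Lemma lambda_min_frame_mx_le u :
  lambda_min frame_mx * mf_dot u u <= \sum_(i | P i) mf_dot (v i) u ^+ 2.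
Proof. by rewrite -dot_frame_mx; apply: lambda_min_le frame_mx_sym frame_mx_psd d_gt0 u. Qed.

End FrameOperator.

Section Orbits.
Variables (R : realType) (d : nat) (G : seq 'M[R]_d).
Hypothesis G_orth : finite_orth_group G.
Implicit Types (g h k : 'M[R]_d) (x y z p q v w : 'cV[R]_d).

Lemma orthG1 : 1%:M \in G. Proof. by case: G_orth. Qed.
Lemma orthGM g h : g \in G -> h \in G -> g *m h \in G.
Proof. by case: G_orth => _ + _ _; apply. Qed.
Lemma orthGT g : g \in G -> g^T \in G. Proof. by case: G_orth => _ _ + _; apply. Qed.
Lemma orthGK g : g \in G -> g^T *m g = 1%:M. Proof. by case: G_orth => _ _ _; apply. Qed.

Lemma G_neq_nil : G != [::].
Proof. by apply: contraTneq orthG1 => ->. Qed.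

Lemma dot_orthG g x y : g \in G -> mf_dot (g *m x) (g *m y) = mf_dot x y.
Proof. by move=> gG; rewrite dot_mulmx mulmxA orthGK // mul1mx. Qed.

Lemma enorm_orthG g x : g \in G -> enorm (g *m x) = enorm x.
Proof. by move=> gG; rewrite /enorm dot_orthG. Qed.

Lemma gorbit_refl x : gorbit G x x.
Proof. by exists 1%:M; rewrite ?mul1mx ?orthG1. Qed.

Lemma gorbitM g x p : g \in G -> gorbit G x p -> gorbit G x (g *m p).
Proof. by move=> gG [h hG ->]; exists (g *m h); rewrite ?orthGM ?mulmxA. Qed.

Lemma gorbit_transitive x p q : gorbit G x p -> gorbit G x q ->
  exists2 g, g \in G & q = g *m p.
Proof.
move=> [g gG ->] [h hG ->]; exists (h *m g^T); first by rewrite orthGM ?orthGT.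
by rewrite -mulmxA (mulmxA g^T) orthGK // mul1mx.
Qed.

Lemma gorbit_mulE k x : k \in G -> gorbit G (k *m x) = gorbit G x.
Proof.
move=> kG; apply/seteqP; split => _ [g gG ->].
  by exists (g *m k); rewrite ?orthGM ?mulmxA.
exists (g *m k^T); rewrite ?orthGM ?orthGT //.
by rewrite -mulmxA (mulmxA k^T) orthGK // mul1mx.
Qed.

Lemma vsel_argmax z x : argmax_orbit G z x (vsel G z x).
Proof.
apply: xgetPex; have [g gG g_max] := argmax_seq (fun g => mf_dot (g *m z) x) G_neq_nil.
by exists (g *m z); split => [|_ [h hG ->]]; [exists g | apply: g_max].
Qed.

Lemma vsel_orbit z x : gorbit G z (vsel G z x).
Proof. by case: (vsel_argmax z x). Qed.

Lemma dot_le_vsel z x p q : gorbit G z p -> gorbit G x q ->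
  mf_dot p q <= mf_dot (vsel G z x) x.
Proof.
move=> zp [h hG ->]; rewrite dotC dot_mulmx dotC.
by case: (vsel_argmax z x) => _; apply; apply: gorbitM; rewrite ?orthGT.
Qed.

Lemma opair_vsel z x : opair G z x = mf_dot (vsel G z x) x.
Proof.
apply: sup_eq_max => [|_ [p [q [zp xq ->]]]]; last exact: dot_le_vsel.
by exists (vsel G z x), x; split; [exact: vsel_orbit | exact: gorbit_refl |].
Qed.

Lemma opair_ub z x p q : gorbit G z p -> gorbit G x q -> mf_dot p q <= opair G z x.
Proof. by rewrite opair_vsel; apply: dot_le_vsel. Qed.

Lemma opair_argmax z y v w : gorbit G z v -> argmax_orbit G y v w ->
  opair G z y = mf_dot v w.
Proof.
move=> zv [yw w_max]; apply/le_anti; rewrite opair_ub // andbT opair_vsel.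
have [g gG ->] := gorbit_transitive zv (vsel_orbit z y).
rewrite dot_mulmx dotC [X in _ <= X]dotC.
exact/w_max/(gorbitM (orthGT gG) (gorbit_refl y)).
Qed.

Lemma opair_lip z x x' : opair G z x - opair G z x' <= enorm z * enorm (x - x').
Proof.
have [g gG vE] := vsel_orbit z x.
have := opair_ub (vsel_orbit z x) (gorbit_refl x').
have := dot_le_enorm (vsel G z x) (x - x').
rewrite (opair_vsel z x) dotBr [X in enorm X]vE enorm_orthG //; lra.
Qed.

Lemma odist_min x y : exists2 k, k \in G & odist G x y = enorm (k *m x - y).
Proof.
have [k kG k_min] := argmax_seq (fun g => - enorm (g *m x - y)) G_neq_nil.
exists k => //; apply: inf_eq_min => [|_ [p [q [[g gG ->] [h hG ->] ->]]]].
  by exists (k *m x), y; split; [exists k | exact: gorbit_refl |].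
rewrite -[X in _ <= X](enorm_orthG _ (orthGT hG)) mulmxBr !mulmxA (orthGK hG) mul1mx -lerN2.
exact/k_min/orthGM/gG/orthGT.
Qed.

Lemma odist_ge0 x y : 0 <= odist G x y.
Proof. by have [k _ ->] := odist_min x y; apply: enorm_ge0. Qed.

Lemma odist_le x y p q : gorbit G x p -> gorbit G y q -> odist G x y <= enorm (p - q).
Proof.
move=> xp yq; apply: ge_inf; last by exists p, q.
by exists 0 => _ [? [? [_ _ ->]]]; apply: enorm_ge0.
Qed.

Lemma odist_gt0 x y : gorbit G x <> gorbit G y -> 0 < odist G x y.
Proof.
move=> xy; have [k kG ->] := odist_min x y.
rewrite lt_def enorm_ge0 andbT enorm_eq0 subr_eq0.
by apply: contra_notN xy => /eqP <-; rewrite gorbit_mulE.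
Qed.

Lemma odist_lip x y x' y' :
  odist G x' y' <= odist G x y + enorm (x' - x) + enorm (y' - y).
Proof.
have [k kG ->] := odist_min x y.
apply: le_trans (odist_le (gorbitM kG (gorbit_refl x')) (gorbit_refl y')) _.
have -> : k *m x' - y' = (k *m x - y) + (k *m (x' - x) - (y' - y)).
  by rewrite mulmxBr; apply/matrixP => i j; rewrite !mxE; ring.
apply: le_trans (enormD _ _) _; rewrite -addrA lerD2l.
by apply: le_trans (enormD _ _) _; rewrite enormN enorm_orthG.
Qed.

End Orbits.

Lemma poly_nonroot_near0 (R : realFieldType) (p : {poly R}) (e : R) : p != 0 -> 0 < e ->
  exists2 t, 0 < t <= e & ~~ root p t.
Proof.
move=> p_neq0 e_gt0; pose ts := [seq e / m.+1%:R | m <- iota 0 (size p)].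
have ts_uniq : uniq ts.
  rewrite map_inj_uniq ?iota_uniq // => m1 m2 /(mulfI (lt0r_neq0 e_gt0))/invr_inj/eqP.
  by rewrite eqr_nat eqSS => /eqP.
have /allPn [_ /mapP [m _ ->] nroot] : ~~ all (root p) ts.
  by apply: contraT => /negPn /(max_poly_roots p_neq0)/(_ ts_uniq); rewrite size_map size_iota ltnn.
exists (e / m.+1%:R) => //; rewrite divr_gt0 ?ltr0Sn //=.
by rewrite ler_pdivrMr ?ltr0Sn // ler_pMr // ler1n.
Qed.

Section Perturbation.
Variables (R : realType) (d : nat).
Implicit Types (x k : 'cV[R]_d) (K : seq 'cV[R]_d) (t : R).

Definition moment_curve t : 'cV[R]_d := \col_(j < d) t ^+ j.+1.

Definition moment_poly x k : {poly R} :=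
  (mf_dot k x)%:P + \sum_(j < d) k j 0 *: 'X^(j.+1).

Lemma moment_polyE x k t : (moment_poly x k).[t] = mf_dot k (x + moment_curve t).
Proof.
rewrite /moment_poly hornerD hornerC horner_sum dotDr; congr (_ + _).
by apply: eq_bigr => j _; rewrite hornerZ hornerXn mxE.
Qed.

Lemma moment_poly_neq0 x k : k != 0 -> moment_poly x k != 0.
Proof.
move=> k_neq0; have [j kj_neq0] : exists j, k j 0 != 0.
  apply/existsP; apply: contraR k_neq0 => /existsPn k0; apply/eqP/matrixP => i l.
  by rewrite (ord1 l) mxE; apply/eqP; move: (k0 i); rewrite negbK.
apply: contra kj_neq0 => /eqP/(congr1 (fun p : {poly R} => p`_j.+1)).
rewrite coef0 coefD coefC add0r coef_sum (bigD1 j) //= coefZ coefXn eqxx mulr1.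
rewrite big1 ?addr0 => [->//|i ij].
by rewrite coefZ coefXn eqSS eq_sym val_eqE (negbTE ij) mulr0.
Qed.

Lemma enorm_moment_curve t : 0 <= t <= 1 -> enorm (moment_curve t) <= d%:R * t.
Proof.
move=> /andP [t_ge0 t_le1]; apply: le_trans (enorm_le_l1 _) _.
have -> : d%:R * t = \sum_(j < d) t by rewrite sumr_const card_ord mulr_natl.
apply: ler_sum => j _.
by rewrite mxE ger0_norm ?exprn_ge0 // exprS ler_piMr ?exprn_ile1.
Qed.

Definition generic_for (K : seq 'cV[R]_d) x := {in K, forall k, k != 0 -> mf_dot k x != 0}.

Lemma exists_generic_near K x e : 0 < e -> exists2 x', enorm (x' - x) <= e & generic_for K x'.
Proof.
move=> e_gt0; pose p := \prod_(k <- K | k != 0) moment_poly x k.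
have p_neq0 : p != 0 by rewrite prodf_seq_neq0; apply/allP => k _; apply/implyP/moment_poly_neq0.
have d1_gt0 : 0 < d%:R + 1 :> R by rewrite ltr_wpDl.
have t0_gt0 : 0 < Num.min 1 (e / (d%:R + 1)) by rewrite lt_min ltr01 divr_gt0.
have [t /andP [t_gt0]] := poly_nonroot_near0 p_neq0 t0_gt0.
rewrite le_min => /andP [t_le1 t_le] nroot.
exists (x + moment_curve t) => [|k kK k_neq0].
  rewrite addrC addKr (le_trans (enorm_moment_curve _)) ?(ltW t_gt0) ?t_le1 //.
  by move: t_le; rewrite ler_pdivlMr //; nra.
rewrite -moment_polyE; move: nroot; rewrite /root horner_prod prodf_seq_neq0.
by move=> /allP/(_ k kK); rewrite k_neq0.
Qed.

End Perturbation.

Section GenericPoints.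
Variables (R : realType) (d n : nat) (G : seq 'M[R]_d) (z : 'I_n -> 'cV[R]_d).
Implicit Types (x : 'cV[R]_d).

Definition fixpoint_normals : seq 'cV[R]_d :=
  [seq (row j (g - 1%:M))^T | g <- G, j <- enum 'I_d].

Definition orbit_differences : seq 'cV[R]_d :=
  [seq gh.1 *m z i - gh.2 *m z i | i <- enum 'I_n, gh <- [seq (g, h) | g <- G, h <- G]].

Lemma Pfree_generic x : generic_for fixpoint_normals x -> Pfree G x.
Proof.
move=> x_gen g gG gx; apply/eqP; apply: contraT => g_neq1.
have [j gj_neq0] : exists j, row j (g - 1%:M) != 0.
  apply/existsP; apply: contraR g_neq1 => /existsPn g1.
  rewrite -subr_eq0; apply/eqP/row_matrixP => j; rewrite row0.
  by apply/eqP; move: (g1 j); rewrite negbK.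
have k_in : (row j (g - 1%:M))^T \in fixpoint_normals.
  by apply: allpairs_f; rewrite ?mem_enum.
have := x_gen _ k_in; rewrite -trmx0 (inj_eq trmx_inj) => /(_ gj_neq0).
by rewrite dotE trmxK -row_mul mulmxBl mul1mx gx subrr !mxE eqxx.
Qed.

Hypothesis G_orth : finite_orth_group G.

Lemma Qcell_generic i x : generic_for orbit_differences x -> Qcell G (z i) x.
Proof.
move=> x_gen; have [g gG g_max] := argmax_seq (fun g => mf_dot (g *m z i) x) (G_neq_nil G_orth).
exists (g *m z i); first by exists g.
move=> _ [h hG ->]; rewrite mulmxA => neq; rewrite lt_def g_max ?orthGM // andbT.
have := x_gen (g *m z i - (h *m g) *m z i); rewrite dotBl subr_eq0 subr_eq0 eq_sym.
apply => //; apply/allpairsP; exists (i, (g, h *m g)); split; rewrite ?mem_enum //=.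
by apply: allpairs_f; rewrite ?orthGM.
Qed.

Lemma Oset_dense x e : 0 < e -> exists2 x', Oset G z x' & enorm (x' - x) <= e.
Proof.
move=> e_gt0.
have [x' near x'_gen] := exists_generic_near (fixpoint_normals ++ orbit_differences) x e_gt0.
exists x' => //; split => [|i].
  by apply: Pfree_generic => k k_in; apply: x'_gen; rewrite mem_cat k_in.
by apply: Qcell_generic => k k_in; apply: x'_gen; rewrite mem_cat k_in orbT.
Qed.

End GenericPoints.

Lemma sum_fibers (V : nmodType) (I : finType) (T : eqType) (s : seq T) (f : I -> T)
    (F : I -> T -> V) : uniq s -> (forall i, f i \in s) ->
  \sum_i F i (f i) = \sum_(w <- s) \sum_(i | f i == w) F i w.
Proof.
move=> s_uniq f_in; under [RHS]eq_bigr do rewrite big_mkcond.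
rewrite exchange_big /=; apply: eq_bigr => i _.
by rewrite (bigD1_seq (f i)) //= eqxx big1 ?addr0 // => w; rewrite eq_sym => /negbTE ->.
Qed.

Section MaxFilterBound.
Variables (R : realType) (d n : nat) (G : seq 'M[R]_d) (z : 'I_n -> 'cV[R]_d).
Hypothesis G_orth : finite_orth_group G.
Implicit Types (x y : 'cV[R]_d) (f : 'I_n -> 'cV[R]_d).

Lemma maxfilter_subE x y f i : Fset G z x y f ->
  (maxfilter G z x - maxfilter G z y) i 0 = mf_dot (vsel G (z i) x) (x - f i).
Proof.
move=> Ff; have [_ f_max] := Ff i.
by rewrite !mxE (opair_vsel G_orth) (opair_argmax G_orth (vsel_orbit G_orth _ _) f_max) dotBr.
Qed.

Lemma Sset_finite x y : finite_set (Sset G x y).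
Proof.
apply: (@sub_finite_set _ _ ((fun g => g *m y) @` [set` G])); last exact/finite_image/finite_seq.
by move=> _ [[g gG ->] _]; exists g.
Qed.

Hypothesis d_gt0 : (0 < d)%N.

Lemma frame_sum_mul_odist_le x y f : Fset G z x y f ->
  (\sum_(w <- fset_set (Sset G x y))
      lambda_min (frame_mx (fun i => f i == w) (fun i => vsel G (z i) x))) * odist G x y ^+ 2
  <= enorm (maxfilter G z x - maxfilter G z y) ^+ 2.
Proof.
move=> Ff; pose v i := vsel G (z i) x; have S_fin := Sset_finite x y.
have f_in i : f i \in fset_set (Sset G x y).
  by rewrite in_fset_set //; apply: mem_set; case: (Ff i).
rewrite enorm_sqr /mf_dot (eq_bigr (fun i => mf_dot (v i) (x - f i) ^+ 2)) => [|i _]; last first.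
  by rewrite (maxfilter_subE i Ff) expr2.
rewrite (sum_fibers (fun i w => mf_dot (v i) (x - w) ^+ 2) (fset_uniq _) f_in).
rewrite mulr_suml big_seq [X in _ <= X]big_seq; apply: ler_sum => w.
rewrite in_fset_set // => /set_mem [yw _].
apply: le_trans (lambda_min_frame_mx_le _ _ d_gt0 _).
rewrite ler_wpM2l ?lambda_min_frame_mx_ge0 // -enorm_sqr.
have := odist_le (gorbit_refl G_orth x) yw; have := odist_ge0 G_orth x y; nra.
Qed.

Lemma fvalue_mul_odist_le x y f : Fset G z x y f ->
  fvalue G z x y f * odist G x y <= enorm (maxfilter G z x - maxfilter G z y).
Proof.
move=> Ff; rewrite /fvalue fsbig_finite /=; last exact: Sset_finite.
have lam_ge0 : 0 <= \sum_(w <- fset_set (Sset G x y))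
    lambda_min (frame_mx (fun i => f i == w) (fun i => vsel G (z i) x)).
  by apply: sumr_ge0 => w _; apply: lambda_min_frame_mx_ge0.
rewrite -(ler_pXn2r (n := 2)) ?nnegrE ?mulr_ge0 ?sqrtr_ge0 ?odist_ge0 ?enorm_ge0 //.
by rewrite exprMn sqr_sqrtr // frame_sum_mul_odist_le.
Qed.

End MaxFilterBound.

Lemma le0_dense_lipschitz (R : realType) (m : nat) (P : set 'cV[R]_m)
    (F : 'cV[R]_m -> 'cV[R]_m -> R) (K : R) : 0 <= K ->
  (forall x e, 0 < e -> exists2 x', P x' & enorm (x' - x) <= e) ->
  (forall x y x' y', F x y <= F x' y' + K * (enorm (x' - x) + enorm (y' - y))) ->
  (forall x y, P x -> P y -> F x y <= 0) -> forall x y, F x y <= 0.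
Proof.
move=> K_ge0 P_dense F_lip F_le0 x y; apply/ler_addgt0Pr => e e_gt0.
have c_gt0 : 0 < 2 * K + 1 by lra.
have del_gt0 : 0 < e / (2 * K + 1) by rewrite divr_gt0.
have [x' Px' xx'] := P_dense x _ del_gt0; have [y' Py' yy'] := P_dense y _ del_gt0.
have K_le : K * (enorm (x' - x) + enorm (y' - y)) <= e.
  apply: le_trans (_ : K * (2 * (e / (2 * K + 1))) <= _); first by rewrite ler_wpM2l //; lra.
  by rewrite !mulrA ler_pdivrMr //; nra.
have := F_le0 _ _ Px' Py'; have := F_lip x y x' y'; lra.
Qed.

Section MaxFilterLowerLipschitz.
Variables (R : realType) (d n : nat) (G : seq 'M[R]_d) (z : 'I_n -> 'cV[R]_d).
Hypothesis G_orth : finite_orth_group G.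
Implicit Types (x y : 'cV[R]_d).

Local Notation Phi := (maxfilter G z).
Local Notation C := (\sum_i enorm (z i)).

Lemma maxfilter_lip x x' : enorm (Phi x' - Phi x) <= C * enorm (x' - x).
Proof.
apply: le_trans (enorm_le_l1 _) _; rewrite mulr_suml; apply: ler_sum => i _.
rewrite !mxE ler_norml opair_lip // andbT lerNl opprB (enormB x').
exact: opair_lip.
Qed.

Lemma maxfilter_dist_lip x y x' y' : enorm (Phi x' - Phi y') <=
  enorm (Phi x - Phi y) + C * (enorm (x' - x) + enorm (y' - y)).
Proof.
have -> : Phi x' - Phi y' = (Phi x - Phi y) + ((Phi x' - Phi x) - (Phi y' - Phi y)).
  by apply/matrixP => i j; rewrite !mxE; ring.
apply: le_trans (enormD _ _) _; rewrite lerD2l mulrDr.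
by apply: le_trans (enormD _ _) _; rewrite enormN lerD ?maxfilter_lip.
Qed.

Lemma mf_alpha_ge0 : 0 <= mf_alpha G z.
Proof. by apply: inf_ge0 => _ [x [y [_ _ ->]]]; apply: sup_ge0 => _ [f _ ->]; apply: sqrtr_ge0. Qed.

Hypothesis d_gt0 : (0 < d)%N.

Lemma mf_alpha_mul_odist_le_Oset x y : Oset G z x -> Oset G z y ->
  mf_alpha G z * odist G x y <= enorm (Phi x - Phi y).
Proof.
move=> Ox Oy; pose sF := sup [set s | exists2 f, Fset G z x y f & s = fvalue G z x y f].
have alpha_le : mf_alpha G z <= sF.
  apply: ge_inf; last by exists x, y.
  by exists 0 => _ [x' [y' [_ _ ->]]]; apply: sup_ge0 => _ [f _ ->]; apply: sqrtr_ge0.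
apply: le_trans (ler_wpM2r (odist_ge0 G_orth x y) alpha_le) _.
apply: sup_mul_le; rewrite ?odist_ge0 ?enorm_ge0 // => _ [f Ff ->].
exact: fvalue_mul_odist_le.
Qed.

Lemma mf_alpha_mul_odist_le x y : mf_alpha G z * odist G x y <= enorm (Phi x - Phi y).
Proof.
rewrite -subr_le0; move: x y.
apply: (le0_dense_lipschitz (K := mf_alpha G z + C)
  (F := fun x y => mf_alpha G z * odist G x y - enorm (Phi x - Phi y)) _ (Oset_dense z G_orth)).
- by rewrite addr_ge0 ?mf_alpha_ge0 // sumr_ge0 // => i _; apply: enorm_ge0.
- move=> x y x' y'; have := odist_lip G_orth x' y' x y; have := maxfilter_dist_lip x y x' y'.
  rewrite (enormB x) (enormB y); have := mf_alpha_ge0; nra.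
- by move=> x y Ox Oy; rewrite subr_le0 mf_alpha_mul_odist_le_Oset.
Qed.

End MaxFilterLowerLipschitz.

Unset Implicit Arguments. Set Strict Implicit.

Theorem theorem26 (R : realType) (d n : nat) (G : seq 'M[R]_d)
    (z : 'I_n -> 'cV[R]_d) :
  finite_orth_group G ->
  forall x y : 'cV[R]_d, gorbit G x <> gorbit G y ->
    mf_alpha G z <= enorm (maxfilter G z x - maxfilter G z y) / odist G x y.
Proof.
move=> G_orth x y xy.
have d_gt0 : (0 < d)%N.
  rewrite lt0n; apply/eqP => d0; apply: xy; congr gorbit.
  by apply/matrixP => -[i i_lt]; exfalso; rewrite d0 in i_lt.
by rewrite ler_pdivlMr ?odist_gt0 // mf_alpha_mul_odist_le.
Qed.
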